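(* Let $\Gamma$ be a distance-regular graph with diameter $D\ge 3$ and valency $k$. Let $\sigma_0,\sigma_1,\dots,\sigma_D$ and $\varepsilon,h$ be real numbers; write $\sigma=\sigma_1$. Then the following are equivalent. (i) $a_1\neq 0$; $\sigma_0,\dots,\sigma_D$ is a feasible pseudo cosine sequence of $\Gamma$, $\varepsilon$ is its auxiliary parameter, and $$h=\frac{(1-\sigma)(1-\sigma_2)}{(\sigma^2-\sigma_2)(1-\varepsilon\sigma)}.$$ (ii) $\sigma_0=1$, $\varepsilon\neq 1$, $\varepsilon\neq -1$, $$k=h\frac{\sigma-\varepsilon}{\sigma-1},$$ $$b_i=h\frac{(\sigma_{i-1}-\sigma\sigma_i)(\sigma_{i+1}-\varepsilon\sigma_i)}{(\sigma_{i-1}-\sigma_{i+1})(\sigma_{i+1}-\sigma_i)}\quad(1\le i\le D-1),$$ $$c_i=h\frac{(\sigma_{i+1}-\sigma\sigma_i)(\sigma_{i-1}-\varepsilon\sigma_i)}{(\sigma_{i+1}-\sigma_{i-1})(\sigma_{i-1}-\sigma_i)}\quad(1\le i\le D-1),$$ and all denominators in these three formulas are nonzero.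
   Context: $\Gamma$ is a finite connected undirected graph without loops or multiple edges, distance-regular with diameter $D$, intersection numbers $a_i,b_i,c_i$ ($c_0=0$, $b_D=0$, $c_1=1$), valency $k=b_0$, $c_i+a_i+b_i=k$. For $\theta\in\mathbb{R}$ the pseudo cosine sequence for $\theta$ is the sequence of reals $\sigma_0,\dots,\sigma_D$ with $\sigma_0=1$ and $c_i\sigma_{i-1}+a_i\sigma_i+b_i\sigma_{i+1}=\theta\sigma_i$ for $0\le i\le D-1$. It is nontrivial if $\sigma_1\ne 1$. Pseudo cosine sequences $\sigma_i$, $\rho_i$ form a tight pair if $(\sigma_i\rho_i)_{i=0}^D$ is a pseudo cosine sequence. For a tight pair of nontrivial pseudo cosine sequences, an auxiliary parameter is a real $\varepsilon$ with $\sigma_i\rho_i-\sigma_{i-1}\rho_{i-1}=\varepsilon(\sigma_{i-1}\rho_i-\sigma_i\rho_{i-1})$ for $1\le i\le D$. When $a_1\neq 0$: a nontrivial pseudo cosine sequence $\sigma_0,\dots,\sigma_D$ is tight if some nontrivial pseudo cosine sequence $\rho_0,\dots,\rho_D$ forms a tight pair with it, and its auxiliary parameter is the (uniquely determined) auxiliary parameter of that pair; a pseudo cosine sequence is feasible if it is tight and $\sigma_{i-1}\neq\sigma_{i+1}$ for $1\le i\le D-1$. *)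

From mathcomp Require Import all_boot all_order all_algebra.
Set Implicit Arguments. Unset Strict Implicit. Unset Printing Implicit Defensive.
Import Order.TTheory GRing.Theory Num.Theory.

Section Graph.
Variables (T : finType) (adj : rel T).

Fixpoint ball (x : T) (n : nat) : {set T} :=
  if n is m.+1 then ball x m :|: [set z | [exists w in ball x m, adj w z]]
  else [set x].

(* graph distance (equals #|T| if y is unreachable from x) *)
Definition dist (x y : T) : nat := find (fun n => y \in ball x n) (iota 0 #|T|).

Definition diameter : nat := \max_(x : T) \max_(y : T) dist x y.

Definition c_count (x y : T) : nat := #|[set z | adj y z & (dist x z).+1 == dist x y]|.
Definition a_count (x y : T) : nat := #|[set z | adj y z & dist x z == dist x y]|.
Definition b_count (x y : T) : nat := #|[set z | adj y z & dist x z == (dist x y).+1]|.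

(* The graph is distance-regular with intersection numbers a_i, b_i, c_i:
   these counts depend only on i = dist x y and equal a i, b i, c i. *)
Definition intersection_numbers (a b c : nat -> nat) : Prop :=
  forall x y : T,
    [/\ c_count x y = c (dist x y), a_count x y = a (dist x y)
      & b_count x y = b (dist x y)].

Definition simple_connected_graph : Prop :=
  [/\ symmetric adj, irreflexive adj & forall x y : T, connect adj x y].
End Graph.

Local Open Scope ring_scope.

Section Cosine.
Variables (R : realFieldType) (a b c : nat -> nat) (D : nat).

(* pseudo cosine sequence sigma_0..sigma_D for theta (only indices <= D matter) *)
Definition pseudo_cosine_for (theta : R) (s : nat -> R) : Prop :=
  s 0%N = 1 /\
  forall i : nat, (i < D)%N ->
    (c i)%:R * s i.-1 + (a i)%:R * s i + (b i)%:R * s i.+1 = theta * s i.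

Definition pseudo_cosine (s : nat -> R) : Prop := exists theta, pseudo_cosine_for theta s.

Definition nontrivial_pcs (s : nat -> R) : Prop := pseudo_cosine s /\ s 1%N != 1.

Definition tight_pair (s r : nat -> R) : Prop :=
  pseudo_cosine s /\ pseudo_cosine r /\ pseudo_cosine (fun i => s i * r i).

Definition aux_param_pair (s r : nat -> R) (eps : R) : Prop :=
  forall i : nat, (1 <= i <= D)%N ->
    s i * r i - s i.-1 * r i.-1 = eps * (s i.-1 * r i - s i * r i.-1).

Definition tight_pcs (s : nat -> R) : Prop :=
  nontrivial_pcs s /\ exists r, nontrivial_pcs r /\ tight_pair s r.

Definition aux_param (s : nat -> R) (eps : R) : Prop :=
  exists r, [/\ nontrivial_pcs r, tight_pair s r & aux_param_pair s r eps].

Definition feasible_pcs (s : nat -> R) : Prop :=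
  tight_pcs s /\ forall i : nat, (1 <= i <= D.-1)%N -> s i.-1 != s i.+1.
End Cosine.

(* For a tight pair (s, r) with auxiliary parameter eps, the auxiliary relation
   r_i (s_i - eps s_{i-1}) = r_{i-1} (s_{i-1} - eps s_i) eliminates r from the
   three-term recurrence of r.  Together with the recurrence of s this leaves two
   linear equations in b_i and c_i, whose solution is the formula of (ii); the
   factor h is fixed by c_1 = 1.  The degenerate cases (s_1 = -1, r_i = 0,
   eps = 1 or -1, s_{i-1} = s_i) are ruled out by a_1 <> 0, D >= 3 and
   feasibility.  Conversely, under (ii) s satisfies the recurrence, and the
   solution r of the auxiliary relation with r_0 = 1 is a partner of s: both r
   and s r satisfy the recurrence by direct computation. *)

From mathcomp Require Import all_boot all_order all_algebra.
From mathcomp Require Import ring lra zify.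
Import Order.TTheory GRing.Theory Num.Theory.
Set Implicit Arguments. Unset Strict Implicit. Unset Printing Implicit Defensive.

Section Distance.
Variables (T : finType) (adj : rel T).
Implicit Types (x y z : T) (m n : nat).

Lemma dist_ub x y : dist adj x y <= #|T|.
Proof.
have := find_size (fun n => y \in ball adj x n) (iota 0 #|T|).
by rewrite size_iota.
Qed.

Lemma mem_ball_dist x y : dist adj x y < #|T| -> y \in ball adj x (dist adj x y).
Proof.
move=> lt_d; have: has (fun n => y \in ball adj x n) (iota 0 #|T|).
  by rewrite has_find size_iota.
by move/(nth_find 0); rewrite nth_iota.
Qed.

Lemma dist_le_ball x y n : n < #|T| -> y \in ball adj x n -> dist adj x y <= n.
Proof.
move=> lt_n y_n; rewrite leqNgt; apply/negP => /(before_find 0).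
by rewrite nth_iota // add0n y_n.
Qed.

Lemma notin_ball_dist x y n : n < dist adj x y -> y \notin ball adj x n.
Proof.
move=> lt_n; have lt_nT : n < #|T| := leq_trans lt_n (dist_ub x y).
by have := before_find 0 lt_n; rewrite nth_iota // add0n => ->.
Qed.

Lemma dist_xx x : dist adj x x = 0.
Proof.
apply/eqP; rewrite -leqn0; apply: dist_le_ball; last by rewrite inE.
by apply/card_gt0P; exists x.
Qed.

Lemma dist_eq0 x y : dist adj x y = 0 -> y = x.
Proof.
move=> d0; have: y \in ball adj x 0.
  by rewrite -d0 mem_ball_dist // d0; apply/card_gt0P; exists x.
by rewrite inE => /eqP.
Qed.

Lemma dist_adj_leS x y z : adj y z -> dist adj x z <= (dist adj x y).+1.
Proof.
move=> yz; have [lt_yT|] := ltnP (dist adj x y) #|T|; last first.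
  by move/leqW; apply: leq_trans (dist_ub x z).
have [lt_ST|] := ltnP (dist adj x y).+1 #|T|; last by apply: leq_trans (dist_ub x z).
apply: dist_le_ball => //=; rewrite !inE; apply/orP; right.
by apply/existsP; exists y; rewrite mem_ball_dist.
Qed.

Lemma dist_pred x y m : dist adj x y = m.+1 -> m.+1 < #|T| ->
  exists2 w, adj w y & dist adj x w = m.
Proof.
move=> dy lt_mT; have lt_yT : dist adj x y < #|T| by rewrite dy.
have := mem_ball_dist lt_yT; rewrite dy /= !inE => /orP[y_m|/existsP[w /andP[w_m wy]]].
  by have := @notin_ball_dist x y m; rewrite dy ltnSn y_m => /(_ isT).
exists w => //; apply/eqP; rewrite eqn_leq dist_le_ball ?(ltnW lt_mT) //=.
by rewrite -ltnS -dy dist_adj_leS.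
Qed.

Lemma dist_path_le x u p :
  path adj u p -> dist adj x (last u p) <= dist adj x u + size p.
Proof.
elim: p u => [|v p IHp] u /=; first by rewrite addn0.
case/andP=> uv /IHp/leq_trans-> //.
by rewrite addnS -addSn leq_add2r dist_adj_leS.
Qed.

Lemma connect_dist_lt x y : connect adj x y -> dist adj x y < #|T|.
Proof.
case/connectP=> p /shortenP[q q_path q_uniq _] ->.
apply: leq_ltn_trans (dist_path_le x q_path) _; rewrite dist_xx add0n.
by have := max_card (mem (x :: q)); rewrite (card_uniqP q_uniq).
Qed.

End Distance.

Record intersection_array (a b c : nat -> nat) (D : nat) : Prop := IntersectionArray {
  ia_D_gt0 : 0 < D;
  ia_c0 : c 0 = 0;
  ia_a0 : a 0 = 0;
  ia_c1 : c 1 = 1;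
  ia_sum : forall i, i < D -> c i + a i + b i = b 0;
  ia_b_gt0 : forall i, i < D -> 0 < b i;
  ia_c_gt0 : forall i, 0 < i <= D -> 0 < c i }.

Section DistanceRegular.
Variables (T : finType) (adj : rel T) (a b c : nat -> nat).
Hypotheses (adj_sym : symmetric adj) (adj_irr : irreflexive adj)
  (adj_conn : forall x y : T, connect adj x y)
  (abc : intersection_numbers adj a b c).
Implicit Types (x y z : T).

Lemma card_neighbours_split x y :
  c_count adj x y + a_count adj x y + b_count adj x y = #|[set z | adj y z]|.
Proof.
have card_set (P : pred T) : #|[set z | P z]| = \sum_z P z.
  by rewrite -sum1_card big_mkcond; apply: eq_bigr => z _; rewrite inE; case: (P z).
rewrite /c_count /a_count /b_count !card_set -!big_split; apply: eq_bigr => z _ /=.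
case yz: (adj y z) => //=.
have := dist_adj_leS x yz; rewrite adj_sym in yz; have := dist_adj_leS x yz.
by case: eqP; case: eqP; case: eqP => /=; lia.
Qed.

Lemma b_count_xx y : b_count adj y y = #|[set z | adj y z]|.
Proof.
apply: eq_card => z; rewrite !inE dist_xx.
case yz: (adj y z) => //=; have := dist_adj_leS y yz; rewrite dist_xx.
case: (dist adj y z) (@dist_eq0 _ adj y z) => [|[|n]] //= /(_ erefl) zy.
by rewrite zy adj_irr in yz.
Qed.

Lemma dist_geodesic x y n : n <= dist adj x y -> exists z, dist adj x z = n.
Proof.
move=> le_n; have [m dy] : exists m, dist adj x y = n + m by exists (dist adj x y - n); lia.
elim: m y {le_n} dy => [|m IHm] y dy; first by exists y; rewrite dy addn0.
rewrite addnS in dy; have lt_T : (n + m).+1 < #|T| by rewrite -dy connect_dist_lt.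
by have [w _] := dist_pred dy lt_T; apply: IHm.
Qed.

Lemma edge_across i : i < diameter adj ->
  exists x y z, [/\ adj y z, dist adj x y = i & dist adj x z = i.+1].
Proof.
move=> lt_i; have T_gt0 : 0 < #|T|.
  case: (pickP (fun _ : T => true)) => [x0 _|T0]; first by apply/card_gt0P; exists x0.
  by rewrite /diameter big_pred0 in lt_i.
have [x dE] := bigop.eq_bigmax (fun x => \max_(y : T) dist adj x y) T_gt0.
have [y dyE] := bigop.eq_bigmax (fun y => dist adj x y) T_gt0.
rewrite /diameter dE dyE in lt_i.
have [z dz] := dist_geodesic lt_i.
have [y' y'z dy'] : exists2 y', adj y' z & dist adj x y' = i.
  by apply: (dist_pred dz); rewrite -dz connect_dist_lt.
by exists x, y', z.
Qed.

Lemma drg_intersection_array D :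
  D = diameter adj -> 0 < D -> intersection_array a b c D.
Proof.
move=> -> D_gt0; have [x0 [y0 [z0 [y0z0 /dist_eq0 y0E dz0]]]] := edge_across D_gt0.
have [c0E a0E _] := abc x0 x0; rewrite dist_xx in c0E a0E.
split => //.
- rewrite -c0E; apply/eqP; rewrite cards_eq0; apply/eqP/setP => z.
  by rewrite !inE dist_xx andbF.
- rewrite -a0E; apply/eqP; rewrite cards_eq0; apply/eqP/setP => z.
  rewrite !inE dist_xx; apply/negbTE/andP => -[x0z /eqP/dist_eq0 zE].
  by rewrite zE adj_irr in x0z.
- have [c1E _ _] := abc x0 z0; rewrite dz0 in c1E; rewrite -c1E -(cards1 x0).
  apply: eq_card => z; rewrite !inE dz0 eqSS.
  apply/andP/eqP => [[_ /eqP/dist_eq0]//|->]; split; last by rewrite dist_xx.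
  by rewrite adj_sym -y0E.
- move=> i lt_i; have [x [y [_ [_ dy _]]]] := edge_across lt_i.
  have [cE aE bE] := abc x y; have [_ _ b0E] := abc y y; rewrite dist_xx in b0E.
  by rewrite dy in cE aE bE; rewrite -cE -aE -bE -b0E b_count_xx card_neighbours_split.
- move=> i lt_i; have [x [y [z [yz dy dz]]]] := edge_across lt_i.
  have [_ _ bE] := abc x y; rewrite dy in bE; rewrite -bE.
  by apply/card_gt0P; exists z; rewrite !inE yz dy dz eqxx.
- case=> // i /andP[_ lt_i]; have [x [y [z [yz dy dz]]]] := edge_across lt_i.
  have [cE _ _] := abc x z; rewrite dz in cE; rewrite -cE.
  by apply/card_gt0P; exists y; rewrite !inE adj_sym yz dy dz eqxx.
Qed.

End DistanceRegular.

Local Open Scope ring_scope.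

Lemma eq_from_multiple (R : pzRingType) (w l r l' r' : R) :
  l - r = w * (l' - r') -> l' = r' -> l = r.
Proof. by move=> E E'; apply: subr0_eq; rewrite E E' subrr mulr0. Qed.

Section KeyIdentities.
Variable R : fieldType.
Implicit Types x y z p q r u v K h sg e tau : R.

Lemma eliminate_partner x y z p q r u v K sg e tau :
  y * q - x * p = e * (x * q - y * p) ->
  z * r - y * q = e * (y * r - z * q) ->
  u * (p - q) + v * (r - q) = K * (tau - 1) * q ->
  tau * (sg - e) = 1 - e * sg -> q != 0 -> e != -1 ->
  u * (x - y) * (z - e * y) * (sg - e) + v * (z - y) * (x - e * y) * (sg - e)
    = K * (sg - 1) * (x - e * y) * (z - e * y).
Proof.
move=> auxi auxS rec tauE q0 eN1; apply: subr0_eq.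
have : q * (1 + e) * (u * (x - y) * (z - e * y) * (sg - e)
    + v * (z - y) * (x - e * y) * (sg - e) - K * (sg - 1) * (x - e * y) * (z - e * y)) = 0.
  (* multiply the recurrence of [r] by [(x - e y) (z - e y)] and substitute *)
  transitivity (- (sg - e) * (x - e * y) * (z - e * y)
        * (u * (p - q) + v * (r - q) - K * (tau - 1) * q)
    - (sg - e) * (z - e * y) * u * (y * q - x * p - e * (x * q - y * p))
    + (sg - e) * (x - e * y) * v * (z * r - y * q - e * (y * r - z * q))
    - K * q * (x - e * y) * (z - e * y) * (tau * (sg - e) - (1 - e * sg))); first by ring.
  by rewrite rec auxi auxS tauE !subrr; ring.
by move/eqP; rewrite !mulf_eq0 (negbTE q0) addrC addr_eq0 (negbTE eN1) => /eqP.
Qed.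

Lemma key_identities x y z u v K sg e :
  u * (x - y) + v * (z - y) = K * (sg - 1) * y ->
  u * (x - y) * (z - e * y) * (sg - e) + v * (z - y) * (x - e * y) * (sg - e)
    = K * (sg - 1) * (x - e * y) * (z - e * y) ->
  u * (x - y) * (z - x) * (sg - e) = K * (sg - 1) * ((z - sg * y) * (x - e * y))
  /\ v * (z - y) * (x - z) * (sg - e) = K * (sg - 1) * ((x - sg * y) * (z - e * y)).
Proof.
move=> step elim_eq.
have vE : v * (z - y) = K * (sg - 1) * y - u * (x - y) by rewrite -step addrAC subrr add0r.
rewrite vE in elim_eq; rewrite vE.
by split; apply: (eq_from_multiple (w := 1) _ elim_eq); ring.
Qed.

Lemma key_neq0 x y z u v K sg e :
  u * (x - y) + v * (z - y) = K * (sg - 1) * y ->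
  u * (x - y) * (z - x) * (sg - e) = K * (sg - 1) * ((z - sg * y) * (x - e * y)) ->
  v * (z - y) * (x - z) * (sg - e) = K * (sg - 1) * ((x - sg * y) * (z - e * y)) ->
  x - z != 0 -> K * (sg - 1) != 0 -> sg != e -> e != 1 -> v != 0 -> v != K ->
  x - y != 0.
Proof.
move=> step ukey vkey; rewrite !subr_eq0 => xz K0 sge e1 v0 vK.
apply: contra_neq xz => yx.
rewrite -{}yx in step ukey vkey.
have /eqP : K * (sg - 1) * ((z - sg * x) * ((1 - e) * x)) = 0.
  by apply: (eq_from_multiple (w := -1) _ ukey); ring.
rewrite mulf_eq0 (negbTE K0) /= !mulf_eq0 [1 - e == 0]subr_eq0 [1 == e]eq_sym (negbTE e1) /= orbC.
have x0_z : x = 0 -> x = z.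
  move=> x0; move: step; rewrite x0 !subr0 !mulr0 add0r => /eqP.
  by rewrite mulf_eq0 (negbTE v0) eq_sym => /eqP.
case/orP=> [/eqP/x0_z//|/eqP/subr0_eq zE]; apply: x0_z.
have : (v - K) * ((sg - 1) * (sg - 1) * (x * x) * (sg - e)) = 0.
  by apply: (eq_from_multiple (w := -1) _ vkey); rewrite zE; ring.
move: K0; rewrite mulf_eq0 negb_or => /andP[_ sg1].
move/eqP; rewrite !mulf_eq0 subr_eq0 (negbTE vK) (negbTE sg1) subr_eq0 (negbTE sge).
by rewrite /= orbF orbb => /eqP.
Qed.

Lemma solve_key u A B N K h sg e :
  u * A * B * (sg - e) = K * (sg - 1) * N -> K = h * ((sg - e) / (sg - 1)) ->
  A != 0 -> B != 0 -> sg - e != 0 -> sg - 1 != 0 -> u = h * (N / (B * A)).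
Proof.
move=> key KE A0 B0 sge sg1.
apply: (mulIf (_ : A * B * (sg - e) != 0)); first by rewrite !mulf_neq0.
by rewrite !mulrA key KE; field; rewrite A0 B0 sg1.
Qed.

Lemma key_at_one t K h sg e :
  (1 - sg) * (t - 1) * (sg - e) = K * (sg - 1) * ((t - sg * sg) * (1 - e * sg)) ->
  h = (1 - sg) * (1 - t) / ((sg ^+ 2 - t) * (1 - e * sg)) ->
  sg - 1 != 0 -> t - 1 != 0 -> sg - e != 0 -> K = h * ((sg - e) / (sg - 1)).
Proof.
move=> key hE sg1 t1 sge.
have : K * (sg - 1) * ((t - sg * sg) * (1 - e * sg)) != 0.
  by rewrite -key !mulf_neq0 // -opprB oppr_eq0.
rewrite mulf_eq0 negb_or => /andP[_]; rewrite mulf_eq0 negb_or => /andP[tsg esg].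
have sgt : sg ^+ 2 - t != 0 by rewrite expr2 -opprB oppr_eq0.
apply: (mulIf (_ : (sg - 1) * ((t - sg * sg) * (1 - e * sg)) != 0)).
  by rewrite !mulf_neq0.
by rewrite [LHS]mulrA -key hE; field; rewrite sgt esg sg1.
Qed.

End KeyIdentities.

Section FormulaIdentities.
Variables (R : fieldType) (x y z u v K h sg e : R).
Hypotheses (vE : v = h * ((x - sg * y) * (z - e * y) / ((x - z) * (z - y))))
  (uE : u = h * ((z - sg * y) * (x - e * y) / ((z - x) * (x - y))))
  (KE : K = h * ((sg - e) / (sg - 1)))
  (xz : x - z != 0) (zy : z - y != 0) (xy : x - y != 0) (sg1 : sg - 1 != 0).

Let zx : z - x != 0. Proof. by rewrite -opprB oppr_eq0. Qed.

Lemma formula_step : u * (x - y) + v * (z - y) = K * (sg - 1) * y.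
Proof. by rewrite uE vE KE; field; rewrite xz zy zx xy sg1. Qed.

Section Partner.
Variables (p q r tau : R).
Hypotheses (qE : q = p * ((x - e * y) / (y - e * x))) (rE : r = q * ((y - e * z) / (z - e * y)))
  (tauE : tau = (1 - e * sg) / (sg - e))
  (yex : y - e * x != 0) (zey : z - e * y != 0) (sge : sg - e != 0).

Lemma formula_step_partner : u * (p - q) + v * (r - q) = K * (tau - 1) * q.
Proof. by rewrite rE qE uE vE KE tauE; field; rewrite xz zy zx xy sg1 yex zey sge. Qed.

Lemma formula_step_product :
  u * (x * p - y * q) + v * (z * r - y * q) = K * (sg * tau - 1) * (y * q).
Proof. by rewrite rE qE uE vE KE tauE; field; rewrite xz zy zx xy sg1 yex zey sge. Qed.

End Partner.
End FormulaIdentities.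

Lemma formula_a1 (R : fieldType) (t u v K h sg e : R) :
  v = h * ((1 - sg * sg) * (t - e * sg) / ((1 - t) * (t - sg))) ->
  u = h * ((t - sg * sg) * (1 - e * sg) / ((t - 1) * (1 - sg))) ->
  K = h * ((sg - e) / (sg - 1)) ->
  1 - t != 0 -> t - sg != 0 -> sg - 1 != 0 ->
  (K - v - u) * ((sg - 1) * (1 - t) * (t - sg))
    = - h * (1 - e) * (1 + sg) * (t - 1) * (t - sg * sg).
Proof.
move=> -> -> -> t1 tsg sg1.
have t1' : t - 1 != 0 by rewrite -opprB oppr_eq0.
have sg1' : 1 - sg != 0 by rewrite -opprB oppr_eq0.
by field; rewrite t1 tsg sg1 t1' sg1'.
Qed.

Lemma formula_h (R : fieldType) (t h sg e : R) :
  1 = h * ((t - sg * sg) * (1 - e * sg) / ((t - 1) * (1 - sg))) ->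
  t - sg * sg != 0 -> 1 - e * sg != 0 -> t - 1 != 0 -> 1 - sg != 0 ->
  h = (1 - sg) * (1 - t) / ((sg ^+ 2 - t) * (1 - e * sg)).
Proof.
move=> c1E tsg esg t1 sg1.
have sgt : sg ^+ 2 - t != 0 by rewrite expr2 -opprB oppr_eq0.
by rewrite -[RHS]mul1r {1}c1E; field; rewrite esg sgt sg1 t1.
Qed.

(* The auxiliary relation of a tight pair [(s, r)] reads
   [r i * (s i - e * s i.-1) = r i.-1 * (s i.-1 - e * s i)]; [partner s e]
   is its solution with [r 0 = 1]. *)
Fixpoint partner (R : fieldType) (s : nat -> R) (e : R) (n : nat) : R :=
  if n is m.+1 then partner s e m * ((s m - e * s m.+1) / (s m.+1 - e * s m)) else 1.

Section IntersectionArray.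
Variables (R : realFieldType) (a b c : nat -> nat) (D : nat).
Hypothesis abcD : intersection_array a b c D.

Local Notation k := ((b 0%N)%:R : R).
Local Notation pcs := (pseudo_cosine a b c D).
Implicit Types u v : nat -> R.

Lemma a_natE i : (i < D)%N -> (a i)%:R = k - (b i)%:R - (c i)%:R :> R.
Proof. by move=> lt_iD; rewrite -(ia_sum abcD lt_iD) !natrD; ring. Qed.

Lemma b_ge1 i : (i < D)%N -> 1 <= (b i)%:R :> R.
Proof. by move=> lt_iD; rewrite ler1n (ia_b_gt0 abcD). Qed.

Lemma c_ge1 i : (0 < i <= D)%N -> 1 <= (c i)%:R :> R.
Proof. by move=> iD; rewrite ler1n (ia_c_gt0 abcD). Qed.

Lemma b_neq0 i : (i < D)%N -> (b i)%:R != 0 :> R.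
Proof. by move=> lt_iD; rewrite pnatr_eq0 -lt0n (ia_b_gt0 abcD). Qed.

Lemma c_neq0 i : (0 < i <= D)%N -> (c i)%:R != 0 :> R.
Proof. by move=> iD; rewrite pnatr_eq0 -lt0n (ia_c_gt0 abcD). Qed.

Lemma bc_neq_k i : (0 < i < D)%N -> (b i)%:R != k /\ (c i)%:R != k.
Proof.
case/andP=> i_gt0 lt_iD; have ci : (0 < i <= D)%N by rewrite i_gt0 ltnW.
have := c_ge1 ci; have := b_ge1 lt_iD; have := a_natE lt_iD; have := ler0n R (a i).
by split; apply/eqP; lra.
Qed.

Definition cosine_step (u : nat -> R) (i : nat) : Prop :=
  (c i)%:R * (u i.-1 - u i) + (b i)%:R * (u i.+1 - u i) = k * (u 1%N - 1) * u i.

Definition bc_formulas (s : nat -> R) (eps h : R) (i : nat) : Prop :=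
  [/\ (s i.-1 - s i.+1 != 0 /\ s i.+1 - s i != 0),
      (s i.+1 - s i.-1 != 0 /\ s i.-1 - s i != 0),
      (b i)%:R = h * ((s i.-1 - s 1%N * s i) * (s i.+1 - eps * s i)
                      / ((s i.-1 - s i.+1) * (s i.+1 - s i)))
    & (c i)%:R = h * ((s i.+1 - s 1%N * s i) * (s i.-1 - eps * s i)
                      / ((s i.+1 - s i.-1) * (s i.-1 - s i)))].

Lemma pseudo_cosine0 u : pcs u -> u 0%N = 1.
Proof. by case=> ? []. Qed.

Lemma pseudo_cosineP u :
  pcs u <-> u 0%N = 1 /\ forall i, (0 < i < D)%N -> cosine_step u i.
Proof.
split=> [[th [u0 rec]]|[u0 step]].
  have thE : th = k * u 1%N.
    have := rec 0%N (ia_D_gt0 abcD).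
    by rewrite /= (ia_c0 abcD) (ia_a0 abcD) u0 !mul0r !add0r mulr1.
  split=> // i /andP[_ lt_iD]; have := rec i lt_iD.
  by rewrite /cosine_step (a_natE lt_iD) thE; lra.
exists (k * u 1%N); split=> // -[_|i lt_iD].
  by rewrite /= (ia_c0 abcD) (ia_a0 abcD) u0 !mul0r !add0r mulr1.
by have := step i.+1 lt_iD; rewrite /cosine_step (a_natE lt_iD); lra.
Qed.

Lemma pseudo_cosine_ext u v : u =1 v -> pcs u -> pcs v.
Proof. by move=> uv [th [u0 rec]]; exists th; split=> [|i /rec]; rewrite -!uv. Qed.

Lemma pseudo_cosine1 : pcs (fun=> 1 : R).
Proof. by apply/pseudo_cosineP; split=> // i _; rewrite /cosine_step !subrr; ring. Qed.

Lemma pseudo_cosine_eq2 u v :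
  (1 < D)%N -> pcs u -> pcs v -> u 1%N = v 1%N -> u 2%N = v 2%N.
Proof.
move=> D1 /pseudo_cosineP[u0 /(_ 1%N D1) su] /pseudo_cosineP[v0 /(_ 1%N D1) sv] uv1.
apply: (mulfI (b_neq0 D1)); move: su sv.
by rewrite /cosine_step /= u0 v0 -uv1; lra.
Qed.

Lemma pseudo_cosine_s2_gt1 u :
  (1 < D)%N -> a 1%N != 0%N -> pcs u -> u 1%N = -1 -> 1 < u 2%N.
Proof.
move=> D1 a1 /pseudo_cosineP[u0 /(_ 1%N D1)]; rewrite /cosine_step /= u0 (ia_c1 abcD).
move=> su u1; rewrite u1 in su.
have a1_gt0 : 0 < (a 1%N)%:R :> R by rewrite ltr0n lt0n.
by have := b_ge1 D1; have := a_natE D1; rewrite (ia_c1 abcD); nra.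
Qed.

Lemma aux_param_pairC (s r : nat -> R) e :
  aux_param_pair D s r e -> aux_param_pair D r s (- e).
Proof. by move=> aux i /aux; lra. Qed.

(* For [e = -1] the auxiliary relations give [r 2 = r 1] and then [s 3 = - s 2],
   so that the recurrence of [s] at 2 reads [2 a_2 s_2 + c_2 (s_2 - 1) = 0],
   impossible for [s 2 > 1]. *)
Lemma tight_eps_neqN1 (s r : nat -> R) e :
  (2 < D)%N -> pcs s -> pcs r -> aux_param_pair D s r e ->
  s 1%N = -1 -> 1 < s 2%N -> r 1%N != 1 -> e != -1.
Proof.
move=> D2 /pseudo_cosineP[_ s_step] /pseudo_cosineP[r0 r_step] aux s1 s2_gt1 r1.
apply/eqP => eN1; rewrite {}eN1 in aux.
have r2E : r 2%N = r 1%N.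
  have /eqP : (s 2%N - 1) * (r 2%N - r 1%N) = 0.
    by have := aux 2%N (ltnW D2); rewrite /= s1; lra.
  by rewrite mulf_eq0 subr_eq0 gt_eqF //= subr_eq0 => /eqP.
have kr1 : k * r 1%N = -1.
  have := r_step 1%N (ltnW D2); rewrite /cosine_step /= r0 r2E (ia_c1 abcD) => step1.
  have /eqP : (r 1%N - 1) * (k * r 1%N + 1) = 0.
    by apply: (eq_from_multiple (w := -1) _ step1); ring.
  by rewrite mulf_eq0 subr_eq0 (negbTE r1) addr_eq0 => /eqP.
have r3E : r 3%N != r 1%N.
  have := r_step 2%N D2; rewrite /cosine_step /= r2E subrr mulr0 add0r mulrAC kr1.
  by move=> step2; apply: contra_neq r1 => r31; move: step2; rewrite r31; lra.
have s3E : s 3%N = - s 2%N.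
  have /eqP : (s 3%N + s 2%N) * (r 3%N - r 1%N) = 0.
    by have := aux 3%N D2; rewrite /= r2E; lra.
  by rewrite mulf_eq0 subr_eq0 (negbTE r3E) orbF addr_eq0 => /eqP.
have := s_step 2%N D2; rewrite /cosine_step /= s1 s3E.
have := c_ge1 (ltnW D2 : 0 < 2 <= D)%N; have := a_natE D2; have := ler0n R (a 2%N).
nra.
Qed.

(* If [s 1 = -1] then [r 1 = -1], so [s r] starts with 1, 1 and hence
   [s 2 * r 2 = 1], whereas [r 2 = s 2 > 1]. *)
Lemma tight_s1_neqN1 (s r : nat -> R) e :
  (2 < D)%N -> a 1%N != 0%N -> pcs s -> pcs r -> pcs (fun i => s i * r i) ->
  aux_param_pair D s r e -> r 1%N != 1 -> s 1%N != -1.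
Proof.
move=> D2 a1 s_pcs r_pcs sr_pcs aux r1; apply/eqP => s1.
have D1 : (1 < D)%N := ltnW D2.
have s2_gt1 := pseudo_cosine_s2_gt1 D1 a1 s_pcs s1.
have eN1 := tight_eps_neqN1 D2 s_pcs r_pcs aux s1 s2_gt1 r1.
have r1N1 : r 1%N = -1.
  have /eqP : (r 1%N + 1) * (e + 1) = 0.
    have := aux 1%N (ltnW D1); rewrite /= s1 (pseudo_cosine0 s_pcs) (pseudo_cosine0 r_pcs).
    by lra.
  by rewrite mulf_eq0 !addr_eq0 (negbTE eN1) orbF => /eqP.
have r2E : r 2%N = s 2%N by apply: pseudo_cosine_eq2; rewrite ?r1N1.
have := pseudo_cosine_eq2 D1 sr_pcs pseudo_cosine1; rewrite /= s1 r1N1 mulrNN mulr1 r2E.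
by move=> /(_ erefl); nra.
Qed.

Section TightPair.
Variables (s r : nat -> R) (eps : R).
Hypotheses (D_gt2 : (2 < D)%N) (a1_neq0 : a 1%N != 0%N)
  (s_pcs : pcs s) (r_pcs : pcs r) (sr_pcs : pcs (fun i => s i * r i))
  (s1_neq1 : s 1%N != 1) (r1_neq1 : r 1%N != 1) (aux : aux_param_pair D s r eps).

Lemma tight_pair_at1 :
  [/\ eps != 1, eps != -1, s 1%N != eps & r 1%N * (s 1%N - eps) = 1 - eps * s 1%N].
Proof.
have s1N1 := tight_s1_neqN1 D_gt2 a1_neq0 s_pcs r_pcs sr_pcs aux r1_neq1.
have r1N1 : r 1%N != -1.
  apply: (tight_s1_neqN1 D_gt2 a1_neq0 r_pcs s_pcs _ (aux_param_pairC aux) s1_neq1).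
  by apply: pseudo_cosine_ext sr_pcs => i; rewrite mulrC.
have aux1 : s 1%N * r 1%N - 1 = eps * (r 1%N - s 1%N).
  have := @aux 1%N (ltnW (ltnW D_gt2)).
  by rewrite /= (pseudo_cosine0 s_pcs) (pseudo_cosine0 r_pcs) !mulr1 mul1r.
split; last by lra.
- apply/eqP => e1; have /eqP : (s 1%N - 1) * (r 1%N + 1) = 0 by rewrite e1 in aux1; lra.
  by rewrite mulf_eq0 subr_eq0 addr_eq0 (negbTE s1_neq1) (negbTE r1N1).
- apply/eqP => eN1; have /eqP : (s 1%N + 1) * (r 1%N - 1) = 0 by rewrite eN1 in aux1; lra.
  by rewrite mulf_eq0 subr_eq0 addr_eq0 (negbTE s1N1) (negbTE r1_neq1).
- apply/eqP => s1e; have /eqP : (s 1%N - 1) * (s 1%N + 1) = 0 by rewrite -s1e in aux1; lra.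
  by rewrite mulf_eq0 subr_eq0 addr_eq0 (negbTE s1_neq1) (negbTE s1N1).
Qed.

Hypothesis feasible : forall i, (1 <= i <= D.-1)%N -> s i.-1 != s i.+1.

Let s_step : forall i, (0 < i < D)%N -> cosine_step s i :=
  proj2 ((pseudo_cosineP s).1 s_pcs).
Let r_step : forall i, (0 < i < D)%N -> cosine_step r i :=
  proj2 ((pseudo_cosineP r).1 r_pcs).

Lemma tight_partner_neq0 i : (i < D)%N -> r i != 0.
Proof.
elim: i => [_|m IHm lt_mD]; first by rewrite (pseudo_cosine0 r_pcs) oner_eq0.
have rm0 := IHm (ltnW lt_mD); apply/eqP => rm1.
have smE : s m = eps * s m.+1.
  have /eqP : r m * (s m - eps * s m.+1) = 0.
    by have := @aux m.+1 (ltnW lt_mD); rewrite /= rm1; lra.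
  by rewrite mulf_eq0 (negbTE rm0) subr_eq0 => /eqP.
have rm2 : r m.+2 != 0.
  apply: contra_neq (c_neq0 (ltnW lt_mD : 0 < m.+1 <= D)%N) => rm2.
  have := @r_step m.+1 lt_mD; rewrite /cosine_step /= rm1 rm2 !subr0 !mulr0 addr0 => /eqP.
  by rewrite mulf_eq0 (negbTE rm0) orbF => /eqP.
have sm2E : s m.+2 = eps * s m.+1.
  have /eqP : r m.+2 * (s m.+2 - eps * s m.+1) = 0.
    by have := @aux m.+2 lt_mD; rewrite /= rm1; lra.
  by rewrite mulf_eq0 (negbTE rm2) subr_eq0 => /eqP.
suff: s m != s m.+2 by rewrite smE sm2E eqxx.
by apply: (@feasible m.+1); lia.
Qed.

Lemma tight_pair_key i : (0 < i < D)%N ->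
  (c i)%:R * (s i.-1 - s i) * (s i.+1 - s i.-1) * (s 1%N - eps)
    = k * (s 1%N - 1) * ((s i.+1 - s 1%N * s i) * (s i.-1 - eps * s i))
  /\ (b i)%:R * (s i.+1 - s i) * (s i.-1 - s i.+1) * (s 1%N - eps)
    = k * (s 1%N - 1) * ((s i.-1 - s 1%N * s i) * (s i.+1 - eps * s i)).
Proof.
move=> iD; have [_ eN1 _ r1E] := tight_pair_at1.
apply: key_identities; first exact: s_step.
have [i_gt0 lt_iD] := andP iD.
apply: (eliminate_partner (p := r i.-1) (q := r i) (r := r i.+1) (tau := r 1%N)) => //.
- by apply: aux; rewrite i_gt0 ltnW.
- exact: (@aux i.+1).
- exact: r_step.
- exact: tight_partner_neq0.
Qed.

Lemma tight_pair_formulas h :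
  h = (1 - s 1%N) * (1 - s 2%N) / ((s 1%N ^+ 2 - s 2%N) * (1 - eps * s 1%N)) ->
  [/\ s 0%N = 1, eps != 1, eps != -1,
      (s 1%N - 1 != 0 /\ k = h * ((s 1%N - eps) / (s 1%N - 1)))
    & forall i, (1 <= i <= D.-1)%N -> bc_formulas s eps h i].
Proof.
move=> hE; have [e1 eN1 s1e _] := tight_pair_at1.
have s0 := pseudo_cosine0 s_pcs.
have sg1 : s 1%N - 1 != 0 by rewrite subr_eq0.
have sge : s 1%N - eps != 0 by rewrite subr_eq0.
have kE : k = h * ((s 1%N - eps) / (s 1%N - 1)).
  have [+ _] := @tight_pair_key 1%N (ltnW D_gt2).
  rewrite /= s0 (ia_c1 abcD) mul1r => key1; apply: (key_at_one key1 hE sg1 _ sge).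
  by rewrite subr_eq0 eq_sym -{1}s0; apply: (@feasible 1%N); lia.
split=> // i iD; have iD' : (0 < i < D)%N by lia.
have [i_gt0 lt_iD] := andP iD'; have ciD : (0 < i <= D)%N by rewrite i_gt0 ltnW.
have [ckey bkey] := tight_pair_key iD'.
have [bk ck] := bc_neq_k iD'.
have K0 : k * (s 1%N - 1) != 0 by rewrite mulf_neq0 // b_neq0 // (ia_D_gt0 abcD).
have xz : s i.-1 - s i.+1 != 0 by rewrite subr_eq0 feasible.
have zx : s i.+1 - s i.-1 != 0 by rewrite -opprB oppr_eq0.
have xy : s i.-1 - s i != 0.
  exact: (key_neq0 (s_step iD') ckey bkey xz K0 s1e e1 (b_neq0 lt_iD) bk).
have zy : s i.+1 - s i != 0.
  have step := s_step iD'; rewrite /cosine_step addrC in step.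
  exact: (key_neq0 step bkey ckey zx K0 s1e e1 (c_neq0 ciD) ck).
split; [by split | by split | | ].
- exact: (solve_key bkey kE zy xz sge sg1).
- exact: (solve_key ckey kE xy zx sge sg1).
Qed.

End TightPair.

Section Formulas.
Variables (s : nat -> R) (eps h : R).
Hypotheses (s0 : s 0%N = 1) (eps_neq1 : eps != 1) (eps_neqN1 : eps != -1)
  (sg1 : s 1%N - 1 != 0) (kE : k = h * ((s 1%N - eps) / (s 1%N - 1)))
  (formulas : forall i, (1 <= i <= D.-1)%N -> bc_formulas s eps h i).

Local Notation rho := (partner s eps).

Lemma formulas_h_sge_neq0 : h != 0 /\ s 1%N - eps != 0.
Proof.
have : k != 0 by rewrite b_neq0 // (ia_D_gt0 abcD).
by rewrite kE !mulf_eq0 !negb_or => /and3P[-> -> _].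
Qed.

Lemma formula_numerators i : (1 <= i <= D.-1)%N ->
  [/\ s i.-1 - s 1%N * s i != 0, s i.+1 - eps * s i != 0,
      s i.+1 - s 1%N * s i != 0 & s i.-1 - eps * s i != 0].
Proof.
move=> iD; have [_ _ bE cE] := formulas iD.
have /b_neq0 : (i < D)%N by lia.
have /c_neq0 : (0 < i <= D)%N by lia.
rewrite bE cE !mulf_eq0 !negb_or.
by case/and3P=> _ /andP[-> ->] _ /and3P[_ /andP[-> ->] _].
Qed.

Lemma partner_den_neq0 i : (0 < i <= D)%N -> s i - eps * s i.-1 != 0.
Proof.
case: i => [//|[_|m iD]]; first by rewrite s0 mulr1; case: formulas_h_sge_neq0.
have mD : (1 <= m.+1 <= D.-1)%N by lia.
by have [_ + _ _] := formula_numerators mD.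
Qed.

Lemma partner1 : rho 1%N = (1 - eps * s 1%N) / (s 1%N - eps).
Proof. by rewrite /= s0 mul1r mulr1. Qed.

Lemma formulas_pcs : pcs s.
Proof.
apply/pseudo_cosineP; split=> // i iD.
have [[xz zy] [_ xy] bE cE] : bc_formulas s eps h i by apply: formulas; lia.
exact: formula_step bE cE kE xz zy xy sg1.
Qed.

Lemma partner_pcs : pcs rho.
Proof.
apply/pseudo_cosineP; split=> // -[//|m] mD.
have [[xz zy] [_ xy] bE cE] : bc_formulas s eps h m.+1 by apply: formulas; lia.
have [_ sge] := formulas_h_sge_neq0.
apply: (formula_step_partner bE cE kE xz zy xy sg1 _ _ partner1) => //;
  apply: partner_den_neq0; lia.
Qed.

Lemma partner_product_pcs : pcs (fun i => s i * rho i).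
Proof.
apply/pseudo_cosineP; split=> [|[//|m] mD]; first by rewrite s0 mul1r.
have [[xz zy] [_ xy] bE cE] : bc_formulas s eps h m.+1 by apply: formulas; lia.
have [_ sge] := formulas_h_sge_neq0.
apply: (formula_step_product bE cE kE xz zy xy sg1 _ _ partner1) => //;
  apply: partner_den_neq0; lia.
Qed.

Lemma partner_aux : aux_param_pair D s rho eps.
Proof.
move=> [//|m] mD; have := @partner_den_neq0 m.+1 mD.
by rewrite /= => den; field; rewrite den.
Qed.

Lemma partner1_neq1 : rho 1%N != 1.
Proof.
have [_ sge] := formulas_h_sge_neq0; rewrite partner1; apply/eqP => rho1.
have E : 1 - eps * s 1%N = s 1%N - eps.
  by rewrite -(divfK sge (1 - eps * s 1%N)) rho1 mul1r.
have /eqP : (eps + 1) * (s 1%N - 1) = 0 by lra.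
by rewrite mulf_eq0 addr_eq0 (negbTE eps_neqN1) (negbTE sg1).
Qed.

Section IndexOne.
Hypothesis D_gt1 : (1 < D)%N.

Let iD1 : (1 <= 1 <= D.-1)%N. Proof. by case: D D_gt1 => [|[|]]. Qed.

Lemma formulas_a1_neq0 : a 1%N != 0%N.
Proof.
have [[xz zy] [zx xy] bE cE] := formulas iD1; have [n1 _ n3 _] := formula_numerators iD1.
rewrite /= s0 in xz zy zx xy bE cE n1.
have [h0 _] := formulas_h_sge_neq0.
have e1 : 1 - eps != 0 by rewrite subr_eq0 eq_sym.
have s1N1 : 1 + s 1%N != 0.
  apply: contra n1 => /eqP s1E; apply/eqP.
  by transitivity ((1 - s 1%N) * (1 + s 1%N)); [ring | rewrite s1E mulr0].
apply/eqP => a10; have := formula_a1 bE cE kE xz zy sg1.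
rewrite -(a_natE D_gt1) a10 mul0r => /esym/eqP.
by rewrite !mulf_eq0 oppr_eq0 (negbTE h0) (negbTE e1) (negbTE s1N1) (negbTE zx) (negbTE n3).
Qed.

Lemma formulas_h : h = (1 - s 1%N) * (1 - s 2%N) / ((s 1%N ^+ 2 - s 2%N) * (1 - eps * s 1%N)).
Proof.
have [[_ _] [zx xy] _ cE] := formulas iD1; have [_ _ n3 n4] := formula_numerators iD1.
rewrite /= s0 (ia_c1 abcD) in zx xy cE n4.
exact: formula_h cE n3 n4 zx xy.
Qed.

Lemma formulas_tight :
  [/\ a 1%N != 0%N, feasible_pcs a b c D s, aux_param a b c D s eps
    & h = (1 - s 1%N) * (1 - s 2%N) / ((s 1%N ^+ 2 - s 2%N) * (1 - eps * s 1%N))].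
Proof.
have rho_ntriv : nontrivial_pcs a b c D rho := conj partner_pcs partner1_neq1.
have pair : tight_pair a b c D s rho := conj formulas_pcs (conj partner_pcs partner_product_pcs).
have s1 : s 1%N != 1 by rewrite -subr_eq0.
split; [exact: formulas_a1_neq0 | split | exists rho | exact: formulas_h].
- by split; [split; first exact: formulas_pcs | exists rho].
- by move=> i iD; have [[xz _] _ _ _] := formulas iD; rewrite -subr_eq0.
- by split; last exact: partner_aux.
Qed.

End IndexOne.

End Formulas.

End IntersectionArray.

Theorem theorem15p2 (R : realFieldType) (T : finType) (adj : rel T)
    (a b c : nat -> nat) (D : nat) (s : nat -> R) (eps h : R) :
  simple_connected_graph adj ->
  intersection_numbers adj a b c ->
  D = diameter adj ->
  (3 <= D)%N ->
  let k : R := (b 0%N)%:R in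
  let sg := s 1%N in
  ( [/\ a 1%N != 0%N,
        feasible_pcs a b c D s,
        aux_param a b c D s eps
      & h = (1 - sg) * (1 - s 2%N) / ((sg ^+ 2 - s 2%N) * (1 - eps * sg))]
  <->
    [/\ s 0%N = 1, eps != 1, eps != -1,
        (sg - 1 != 0 /\ k = h * ((sg - eps) / (sg - 1)))
      & forall i : nat, (1 <= i <= D.-1)%N ->
          [/\ (s i.-1 - s i.+1 != 0 /\ s i.+1 - s i != 0),
              (s i.+1 - s i.-1 != 0 /\ s i.-1 - s i != 0),
              (b i)%:R = h * ((s i.-1 - sg * s i) * (s i.+1 - eps * s i)
                              / ((s i.-1 - s i.+1) * (s i.+1 - s i)))
            & (c i)%:R = h * ((s i.+1 - sg * s i) * (s i.-1 - eps * s i)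
                              / ((s i.+1 - s i.-1) * (s i.-1 - s i)))]
      ] ).
Proof.
move=> [adj_sym adj_irr adj_conn] abc HD D_gt2 k sg.
have abcD := drg_intersection_array adj_sym adj_irr adj_conn abc HD (ltnW (ltnW D_gt2)).
split.
- case=> a1 [[[s_pcs s1] _] feasible] [r [[r_pcs r1] [_ [_ sr_pcs]] aux]] hE.
  exact (tight_pair_formulas abcD D_gt2 a1 s_pcs r_pcs sr_pcs s1 r1 aux feasible hE).
- case=> s0 e1 eN1 [sg1 kE] formulas.
  exact (formulas_tight abcD s0 e1 eN1 sg1 kE formulas (ltnW D_gt2)).
Qed.
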